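(* Let $V$ be a real vector space, $K$ a convex subset of $V$ spanning $V$, and $\rho$ a metric on $K$. Let $V^0=\{t(\mu-\nu): t\in\mathbb{R},\ \mu,\nu\in K\}$, a vector subspace of $V$. Then there is a norm $M$ on $V^0$ such that $\rho(\mu,\nu)=M(\mu-\nu)$ for all $\mu,\nu\in K$ if and only if $\rho$ is convex, midpoint balanced, and midpoint concave. Such a norm $M$ is unique.
   Context: For a metric $\rho$ on a convex set $K$: $\rho$ is convex if $\rho(\mu,t\nu_1+(1-t)\nu_2)\le t\rho(\mu,\nu_1)+(1-t)\rho(\mu,\nu_2)$ for all $\mu,\nu_1,\nu_2\in K$, $t\in[0,1]$; $\rho$ is midpoint balanced if whenever $\mu,\nu,\mu',\nu'\in K$ satisfy $(\mu+\nu')/2=(\mu'+\nu)/2$ then $\rho(\mu,\nu)=\rho(\mu',\nu')$; $\rho$ is midpoint concave if $\rho((\mu+\mu')/2,(\nu+\nu')/2)\le\frac12(\rho(\mu,\nu)+\rho(\mu',\nu'))$ for all $\mu,\nu,\mu',\nu'\in K$. *)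

From mathcomp Require Import all_boot all_order all_algebra.
From mathcomp Require Import reals.
Set Implicit Arguments. Unset Strict Implicit. Unset Printing Implicit Defensive.
Import Order.TTheory GRing.Theory Num.Theory.
Local Open Scope ring_scope.

Section Defs.
Variables (R : realType) (V : lmodType R).

Definition convex_set (K : V -> Prop) : Prop :=
  forall x y t, K x -> K y -> 0 <= t -> t <= 1 -> K (t *: x + (1 - t) *: y).

Definition spans (K : V -> Prop) : Prop :=
  forall v : V, exists (n : nat) (c : 'I_n -> R) (x : 'I_n -> V),
    (forall i, K (x i)) /\ v = \sum_(i < n) c i *: x i.

Definition is_metric_on (K : V -> Prop) (rho : V -> V -> R) : Prop :=
  [/\ forall x y, K x -> K y -> 0 <= rho x y,
      forall x y, K x -> K y -> rho x y = 0 <-> x = y,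
      forall x y, K x -> K y -> rho x y = rho y x &
      forall x y z, K x -> K y -> K z -> rho x z <= rho x y + rho y z].

Definition V0 (K : V -> Prop) (v : V) : Prop :=
  exists t mu nu, K mu /\ K nu /\ v = t *: (mu - nu).

(* M is a norm on the subspace S (values of M outside S are irrelevant) *)
Definition is_norm_on (S : V -> Prop) (M : V -> R) : Prop :=
  [/\ forall x, S x -> 0 <= M x,
      forall x, S x -> M x = 0 -> x = 0,
      forall a x, S x -> M (a *: x) = `|a| * M x &
      forall x y, S x -> S y -> M (x + y) <= M x + M y].

Definition rho_convex (K : V -> Prop) (rho : V -> V -> R) : Prop :=
  forall mu nu1 nu2 t, K mu -> K nu1 -> K nu2 -> 0 <= t -> t <= 1 ->
    rho mu (t *: nu1 + (1 - t) *: nu2) <= t * rho mu nu1 + (1 - t) * rho mu nu2.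

Definition midpoint_balanced (K : V -> Prop) (rho : V -> V -> R) : Prop :=
  forall mu nu mu' nu', K mu -> K nu -> K mu' -> K nu' ->
    2^-1 *: (mu + nu') = 2^-1 *: (mu' + nu) -> rho mu nu = rho mu' nu'.

Definition midpoint_concave (K : V -> Prop) (rho : V -> V -> R) : Prop :=
  forall mu nu mu' nu', K mu -> K nu -> K mu' -> K nu' ->
    rho (2^-1 *: (mu + mu')) (2^-1 *: (nu + nu'))
      <= 2^-1 * (rho mu nu + rho mu' nu').

End Defs.

From mathcomp Require Import all_boot all_order all_algebra.
From mathcomp Require Import reals.
From mathcomp Require Import ring lra.
From Stdlib Require Import ClassicalEpsilon.
Set Implicit Arguments. Unset Strict Implicit. Unset Printing Implicit Defensive.
Import Order.TTheory GRing.Theory Num.Theory.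
Local Open Scope ring_scope.

(* The norm is forced to be M (t (mu - nu)) = |t| rho(mu, nu).  Midpoint
   balance says that rho (mu, nu) depends only on mu - nu.  Convexity of rho
   along the segment from mu to nu, together with the triangle inequality,
   gives rho (mu, c nu + (1 - c) mu) = c rho (mu, nu) for c in [0, 1]; hence
   the formula does not depend on the representation t (mu - nu) and is
   absolutely homogeneous.  For the triangle inequality, shrink two vectors
   of V0 to differences a - w, a' - w' of points of K with a common scale c;
   then (a - w) + (a' - w') is twice the difference of the midpoints, and
   midpoint concavity bounds its norm by rho (a, w) + rho (a', w'). *)

Section AffineIdentities.
Variables (R : pzRingType) (V : lmodType R).

Lemma sub_convex_comb (mu nu1 nu2 : V) (t : R) :
  mu - (t *: nu1 + (1 - t) *: nu2) = t *: (mu - nu1) + (1 - t) *: (mu - nu2).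
Proof. by rewrite !scalerBr opprD addrACA -scalerDl subrKC scale1r. Qed.

Lemma sub_convex_comb_self (mu nu : V) (t : R) :
  mu - (t *: nu + (1 - t) *: mu) = t *: (mu - nu).
Proof. by rewrite sub_convex_comb subrr scaler0 addr0. Qed.

End AffineIdentities.

Section MidpointIdentities.
Variables (R : numFieldType) (V : lmodType R).

Lemma scale2_half (x : V) : 2 *: (2^-1 *: x) = x.
Proof. by rewrite scalerA mulfV ?scale1r // pnatr_eq0. Qed.

Lemma midpoint_eq_sub (mu nu mu' nu' : V) :
  2^-1 *: (mu + nu') = 2^-1 *: (mu' + nu) <-> mu - nu = mu' - nu'.
Proof.
split=> [/(congr1 ( *:%R 2)) | E].
  by rewrite !scale2_half => E; rewrite -(addrK nu' mu) E addrAC addrK.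
by rewrite -(subrK nu mu) E addrAC subrK.
Qed.

Lemma sum_sub_midpoint (mu nu mu' nu' : V) :
  (mu - nu) + (mu' - nu') = 2 *: (2^-1 *: (mu + mu') - 2^-1 *: (nu + nu')).
Proof. by rewrite -scalerBr scale2_half opprD addrACA. Qed.

End MidpointIdentities.

Section ConvexSets.
Variables (R : realType) (V : lmodType R) (K : V -> Prop).

Lemma convex_set_midpoint (x y : V) :
  convex_set K -> K x -> K y -> K (2^-1 *: (x + y)).
Proof.
move=> cK Kx Ky; have half : 1 - 2^-1 = 2^-1 :> R by lra.
by rewrite scalerDr -{2}half; apply: cK => //; lra.
Qed.

Lemma V0_sub (mu nu : V) : K mu -> K nu -> V0 K (mu - nu).
Proof. by move=> Kmu Knu; exists 1, mu, nu; rewrite scale1r. Qed.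

End ConvexSets.

Section Metric.
Variables (R : realType) (V : lmodType R) (K : V -> Prop) (rho : V -> V -> R).
Hypothesis mK : is_metric_on K rho.

Lemma metric_ge0 x y : K x -> K y -> 0 <= rho x y.
Proof. by case: mK => h _ _ _; apply: h. Qed.

Lemma metric_xx x : K x -> rho x x = 0.
Proof. by case: mK => _ h _ _ Kx; apply: (proj2 (h x x Kx Kx)). Qed.

Lemma metric_eq0 x y : K x -> K y -> rho x y = 0 -> x = y.
Proof. by case: mK => _ h _ _ Kx Ky; apply: (proj1 (h x y Kx Ky)). Qed.

Lemma metric_sym x y : K x -> K y -> rho x y = rho y x.
Proof. by case: mK => _ _ h _; apply: h. Qed.

Lemma metric_triangle x y z : K x -> K y -> K z -> rho x z <= rho x y + rho y z.
Proof. by case: mK => _ _ _ h; apply: h. Qed.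

End Metric.

Section NormInducedMetric.
Variables (R : realType) (V : lmodType R) (K : V -> Prop) (rho : V -> V -> R).
Variable M : V -> R.
Hypotheses (cK : convex_set K) (nM : is_norm_on (V0 K) M).
Hypothesis rhoM : forall mu nu, K mu -> K nu -> rho mu nu = M (mu - nu).

Lemma norm_rho_convex : rho_convex K rho.
Proof.
case: nM => _ _ MZ MD mu nu1 nu2 t Kmu K1 K2 t0 t1.
rewrite !rhoM ?sub_convex_comb //; last exact: cK.
have V1 : V0 K (t *: (mu - nu1)) by exists t, mu, nu1.
have V2 : V0 K ((1 - t) *: (mu - nu2)) by exists (1 - t), mu, nu2.
apply: le_trans (MD _ _ V1 V2) _.
rewrite (MZ _ _ (V0_sub Kmu K1)) (MZ _ _ (V0_sub Kmu K2)).
by rewrite (ger0_norm t0) ger0_norm ?subr_ge0.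
Qed.

Lemma norm_midpoint_balanced : midpoint_balanced K rho.
Proof.
by move=> mu nu mu' nu' Kmu Knu Kmu' Knu' /midpoint_eq_sub E; rewrite !rhoM // E.
Qed.

Lemma norm_midpoint_concave : midpoint_concave K rho.
Proof.
case: nM => _ _ MZ MD mu nu mu' nu' Kmu Knu Kmu' Knu'.
have Km1 := convex_set_midpoint cK Kmu Kmu'.
have Km2 := convex_set_midpoint cK Knu Knu'.
have := MD _ _ (V0_sub Kmu Knu) (V0_sub Kmu' Knu').
rewrite !rhoM // sum_sub_midpoint (MZ _ _ (V0_sub Km1 Km2)) ger0_norm //; lra.
Qed.

End NormInducedMetric.

Lemma norm_on_V0_unique (R : realType) (V : lmodType R) (K : V -> Prop)
    (rho : V -> V -> R) (M1 M2 : V -> R) :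
  is_norm_on (V0 K) M1 -> (forall mu nu, K mu -> K nu -> rho mu nu = M1 (mu - nu)) ->
  is_norm_on (V0 K) M2 -> (forall mu nu, K mu -> K nu -> rho mu nu = M2 (mu - nu)) ->
  forall x, V0 K x -> M1 x = M2 x.
Proof.
move=> [_ _ M1Z _] rhoM1 [_ _ M2Z _] rhoM2 _ [t [mu [nu [Kmu [Knu ->]]]]].
have Vd := V0_sub Kmu Knu.
by rewrite (M1Z _ _ Vd) (M2Z _ _ Vd) -rhoM1 // -rhoM2.
Qed.

Section MetricInducedNorm.
Variables (R : realType) (V : lmodType R) (K : V -> Prop) (rho : V -> V -> R).
Hypotheses (cK : convex_set K) (mK : is_metric_on K rho).
Hypotheses (rc : rho_convex K rho) (mb : midpoint_balanced K rho).
Hypothesis mc : midpoint_concave K rho.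

Lemma rho_subE mu nu mu' nu' : K mu -> K nu -> K mu' -> K nu' ->
  mu - nu = mu' - nu' -> rho mu nu = rho mu' nu'.
Proof. by move=> Kmu Knu Kmu' Knu' /midpoint_eq_sub; apply: mb. Qed.

(* Convexity bounds both rho (mu, w) and rho (w, nu) for w on the segment,
   and the triangle inequality through w makes both bounds sharp. *)
Lemma rho_convex_comb mu nu c : K mu -> K nu -> 0 <= c -> c <= 1 ->
  rho mu (c *: nu + (1 - c) *: mu) = c * rho mu nu.
Proof.
move=> Kmu Knu c0 c1; set w := c *: nu + (1 - c) *: mu.
have Kw : K w by apply: cK.
have le_mu := rc Kmu Knu Kmu c0 c1.
have le_nu : rho nu w <= (1 - c) * rho nu mu + (1 - (1 - c)) * rho nu nu.
  have -> : w = (1 - c) *: mu + (1 - (1 - c)) *: nu.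
    by rewrite /w addrC (_ : 1 - (1 - c) = c) //; ring.
  by apply: rc => //; lra.
have tri := metric_triangle mK Kmu Kw Knu.
rewrite !(metric_xx mK) // -/w in le_mu le_nu.
rewrite (metric_sym mK Kw Knu) (metric_sym mK Knu Kmu) in tri le_nu *.
have := metric_ge0 mK Kmu Knu; lra.
Qed.

Lemma rho_scale_sub mu nu mu' nu' c : K mu -> K nu -> K mu' -> K nu' ->
  0 <= c -> c <= 1 -> mu' - nu' = c *: (mu - nu) -> rho mu' nu' = c * rho mu nu.
Proof.
move=> Kmu Knu Kmu' Knu' c0 c1 E.
rewrite -rho_convex_comb //; apply: rho_subE => //; first exact: cK.
by rewrite sub_convex_comb_self.
Qed.

Lemma rho_scale_nonneg t s mu nu mu' nu' : K mu -> K nu -> K mu' -> K nu' ->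
  0 <= t -> 0 <= s -> t *: (mu - nu) = s *: (mu' - nu') ->
  t * rho mu nu = s * rho mu' nu'.
Proof.
wlog st : t s mu nu mu' nu' / s <= t => [wl Kmu Knu Kmu' Knu' t0 s0 E|].
  have [|/ltW ts] := leP s t; first by move/wl; apply.
  by symmetry; apply: wl.
move=> Kmu Knu Kmu' Knu' t0 s0 E.
have [t_eq0|tn0] := eqVneq t 0.
  have s_eq0 : s = 0 by apply/le_anti; rewrite s0 andbT -t_eq0.
  by rewrite t_eq0 s_eq0 !mul0r.
have tp : 0 < t by rewrite lt_neqAle eq_sym tn0.
have Ec : mu - nu = (s / t) *: (mu' - nu').
  by rewrite mulrC -scalerA -E scalerA mulVf ?scale1r.
have c0 : 0 <= s / t by rewrite divr_ge0.
have c1 : s / t <= 1 by rewrite ler_pdivrMr // mul1r.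
by rewrite (rho_scale_sub Kmu' Knu' Kmu Knu c0 c1 Ec) mulrA mulrCA mulfV ?mulr1.
Qed.

Lemma scaled_sub_nonneg_rep t mu nu : K mu -> K nu -> exists t' a b,
  [/\ K a, K b, 0 <= t', t *: (mu - nu) = t' *: (a - b)
    & `|t| * rho mu nu = t' * rho a b].
Proof.
move=> Kmu Knu; have [t0|t0] := lerP 0 t.
  by exists t, mu, nu; rewrite ger0_norm.
exists (- t), nu, mu; split => //.
- by rewrite oppr_ge0 ltW.
- by rewrite scaleNr -scalerN opprB.
- by rewrite ltr0_norm // (metric_sym mK).
Qed.

Lemma rho_scale t s mu nu mu' nu' : K mu -> K nu -> K mu' -> K nu' ->
  t *: (mu - nu) = s *: (mu' - nu') -> `|t| * rho mu nu = `|s| * rho mu' nu'.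
Proof.
move=> Kmu Knu Kmu' Knu' E.
have [t' [a [b [Ka Kb t0 Et ->]]]] := scaled_sub_nonneg_rep t Kmu Knu.
have [s' [a' [b' [Ka' Kb' s0 Es ->]]]] := scaled_sub_nonneg_rep s Kmu' Knu'.
by apply: rho_scale_nonneg => //; rewrite -Et -Es.
Qed.

(* Off V0 the chosen triple is junk; the value there is irrelevant. *)
Definition metric_norm (v : V) : R :=
  let p := epsilon (inhabits (0 : R, 0 : V, 0 : V))
    (fun p => [/\ K p.1.2, K p.2 & v = p.1.1 *: (p.1.2 - p.2)]) in
  `|p.1.1| * rho p.1.2 p.2.

Lemma metric_normE t mu nu : K mu -> K nu ->
  metric_norm (t *: (mu - nu)) = `|t| * rho mu nu.
Proof.
move=> Kmu Knu; rewrite /metric_norm; set P := fun p : R * V * V => _.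
have [Ka Kb E] := epsilon_spec (inhabits (0 : R, 0 : V, 0 : V)) P
  (ex_intro P (t, mu, nu) (And3 Kmu Knu erefl)).
exact: rho_scale.
Qed.

Lemma metric_norm_sub mu nu : K mu -> K nu -> metric_norm (mu - nu) = rho mu nu.
Proof.
by move=> Kmu Knu; rewrite -[mu - nu]scale1r metric_normE // normr1 mul1r.
Qed.

Lemma shrink_sub a b t c : K a -> K b -> 0 <= t -> t <= c -> 0 < c ->
  exists w, K w /\ t *: (a - b) = c *: (a - w).
Proof.
move=> Ka Kb t0 tc c0.
have r0 : 0 <= t / c by rewrite divr_ge0 // ltW.
have r1 : t / c <= 1 by rewrite ler_pdivrMr // mul1r.
exists ((t / c) *: b + (1 - t / c) *: a); split; first exact: cK.
by rewrite sub_convex_comb_self scalerA mulrCA divff ?mulr1 // gt_eqF.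
Qed.

Lemma metric_norm_scale_add_sub c a b a' b' : K a -> K b -> K a' -> K b' ->
  metric_norm (c *: ((a - b) + (a' - b'))) <= `|c| * (rho a b + rho a' b').
Proof.
move=> Ka Kb Ka' Kb'.
have Km1 := convex_set_midpoint cK Ka Ka'.
have Km2 := convex_set_midpoint cK Kb Kb'.
rewrite sum_sub_midpoint scalerA metric_normE // normrM -mulrA ler_wpM2l //.
have := mc Ka Kb Ka' Kb'; rewrite ger0_norm //; lra.
Qed.

Lemma metric_norm_ge0 x : V0 K x -> 0 <= metric_norm x.
Proof.
move=> [t [mu [nu [Kmu [Knu ->]]]]].
by rewrite metric_normE // mulr_ge0 // (metric_ge0 mK).
Qed.

Lemma metric_norm_eq0 x : V0 K x -> metric_norm x = 0 -> x = 0.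
Proof.
move=> [t [mu [nu [Kmu [Knu ->]]]]]; rewrite metric_normE //.
move=> /eqP; rewrite mulf_eq0 normr_eq0 => /orP[/eqP ->|/eqP]; first exact: scale0r.
by move/(metric_eq0 mK Kmu Knu) ->; rewrite subrr scaler0.
Qed.

Lemma metric_normZ a x : V0 K x -> metric_norm (a *: x) = `|a| * metric_norm x.
Proof.
move=> [t [mu [nu [Kmu [Knu ->]]]]].
by rewrite scalerA !metric_normE // normrM mulrA.
Qed.

Lemma metric_normD x y : V0 K x -> V0 K y ->
  metric_norm (x + y) <= metric_norm x + metric_norm y.
Proof.
move=> [t1 [mu [nu [Kmu [Knu ->]]]]] [t2 [mu' [nu' [Kmu' [Knu' ->]]]]].
have [t [a [b [Ka Kb t0 -> _]]]] := scaled_sub_nonneg_rep t1 Kmu Knu.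
have [s [a' [b' [Ka' Kb' s0 -> _]]]] := scaled_sub_nonneg_rep t2 Kmu' Knu'.
pose c := t + s + 1.
have c0 : 0 < c by rewrite /c; lra.
have tc : t <= c by rewrite /c; lra.
have sc : s <= c by rewrite /c; lra.
have [w [Kw ->]] := shrink_sub Ka Kb t0 tc c0.
have [w' [Kw' ->]] := shrink_sub Ka' Kb' s0 sc c0.
rewrite -scalerDr !metric_normE // -mulrDr.
exact: metric_norm_scale_add_sub.
Qed.

Lemma metric_norm_is_norm : is_norm_on (V0 K) metric_norm.
Proof.
split; [exact: metric_norm_ge0 | exact: metric_norm_eq0 |
        exact: metric_normZ | exact: metric_normD].
Qed.

End MetricInducedNorm.

Theorem theorem9p7 (R : realType) (V : lmodType R) (K : V -> Prop)
    (rho : V -> V -> R) :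
  convex_set K -> spans K -> is_metric_on K rho ->
  ((exists M : V -> R, is_norm_on (V0 K) M /\
      forall mu nu, K mu -> K nu -> rho mu nu = M (mu - nu))
    <-> [/\ rho_convex K rho, midpoint_balanced K rho & midpoint_concave K rho])
  /\
  (forall M1 M2 : V -> R,
      is_norm_on (V0 K) M1 -> (forall mu nu, K mu -> K nu -> rho mu nu = M1 (mu - nu)) ->
      is_norm_on (V0 K) M2 -> (forall mu nu, K mu -> K nu -> rho mu nu = M2 (mu - nu)) ->
      forall x, V0 K x -> M1 x = M2 x).
Proof.
move=> cK _ mK; split; last exact: norm_on_V0_unique.
split=> [[M [nM rhoM]] | [rc mb mc]].
  split; [exact: norm_rho_convex nM rhoM | exact: norm_midpoint_balanced rhoM |
          exact: norm_midpoint_concave nM rhoM].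
exists (metric_norm K rho); split; first exact: metric_norm_is_norm.
by move=> mu nu Kmu Knu; rewrite metric_norm_sub.
Qed.
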